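(* The regular $\mathcal J$-length of the stack monoid $\mathbb M$ satisfies $\mathrm{len}_{\mathcal J}(\mathbb M)\le \frac{|N|^2+|N|+2}{2}+2$.
   Context: Let $\mathcal{G}=(N,T,I,P,S)$ be an indexed grammar (finite non-terminals $N$, terminals $T$, stack symbols $I$, productions of the forms $A\to w$ with $w\in T^*$, $A\to BC$, $A\to Bf$, $Af\to B$). Fix, for every $X\subseteq N$, an arbitrary binary relation $\mathcal R_X$ on $N$ (in the paper, a reachability relation in an auxiliary grammar; the bound does not depend on it). The stack monoid $\mathbb M$ has elements: all tuples $(B,Y,M,A,X)$ with $A,B\in N$, $X,Y\subseteq N$, $M\in\mathbb B^{N\times N}$ (Boolean matrices with product over $(\vee,\wedge)$), plus a neutral element $\mathbf 1$ and an absorbing element $\mathbf 0$; product $(B_2,Y_2,M_2,A_2,X_2)\cdot(B_1,Y_1,M_1,A_1,X_1)=(B_2,Y_2,M_1M_2,A_1,X_1)$ if $X_2=Y_1$ and $B_1\,\mathcal R_{X_2}\,A_2$, and $\mathbf 0$ otherwise. In a finite monoid $\mathbf M$, $x\le_{\mathcal J}y$ iff $x=ayb$ for some $a,b\in\mathbf M$; $x<_{\mathcal J}y$ iff $x\le_{\mathcal J}y$ and not $y\le_{\mathcal J}x$. An element $e$ is idempotent if $ee=e$. The regular $\mathcal J$-length $\mathrm{len}_{\mathcal J}(\mathbf M)$ is the largest $k$ such that there exist idempotents $e_1>_{\mathcal J}e_2>_{\mathcal J}\cdots>_{\mathcal J}e_k$ in $\mathbf M$. *)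

From mathcomp Require Import all_boot.
Set Implicit Arguments. Unset Strict Implicit. Unset Printing Implicit Defensive.

Definition bmat (N : finType) := {ffun N * N -> bool}.

Definition bmat_mul (N : finType) (M1 M2 : bmat N) : bmat N :=
  [ffun ij : N * N => [exists k : N, M1 (ij.1, k) && M2 (k, ij.2)]].

Inductive smon (N : finType) : Type :=
  | SOne : smon N
  | SZero : smon N
  | SElt : N -> {set N} -> bmat N -> N -> {set N} -> smon N.

Arguments SOne {N}.
Arguments SZero {N}.

Definition smul (N : finType) (R : {set N} -> rel N) (x y : smon N) : smon N :=
  match x, y with
  | SOne, _ => y
  | _, SOne => x
  | SZero, _ => SZero
  | _, SZero => SZero
  | SElt B2 Y2 M2 A2 X2, SElt B1 Y1 M1 A1 X1 =>
      if (X2 == Y1) && R X2 B1 A2 then SElt B2 Y2 (bmat_mul M1 M2) A1 X1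
      else SZero
  end.

Definition leJ (N : finType) (R : {set N} -> rel N) (x y : smon N) : Prop :=
  exists a b, x = smul R (smul R a y) b.

Definition ltJ (N : finType) (R : {set N} -> rel N) (x y : smon N) : Prop :=
  leJ R x y /\ ~ leJ R y x.

Definition idempotent_s (N : finType) (R : {set N} -> rel N) (e : smon N) : Prop :=
  smul R e e = e.

Definition regJchain (N : finType) (R : {set N} -> rel N) (k : nat)
  (e : nat -> smon N) : Prop :=
  (forall i, i < k -> idempotent_s R (e i)) /\
  (forall i, i.+1 < k -> ltJ R (e i.+1) (e i)).

From mathcomp Require Import all_boot zify.
Set Implicit Arguments. Unset Strict Implicit. Unset Printing Implicit Defensive.

(* If f <=_J e for tuples then their matrices satisfy M_f = P M_e Q, so it
   suffices to find a J-monotone invariant of idempotent Boolean matrices.  For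
   an idempotent E take the rows E(s, _) at the diagonal points E(s, s) and let
   T(E) be the family of unions of two such rows; |T(E)| <= C(|N|+1, 2).  When
   F = P E Q with E, F idempotent, every row of F at a diagonal point is the image
   of such a row of E under v |-> vQF, so this map sends T(E) onto a superset of
   T(F).  If |T(E)| = |T(F)| it is a bijection T(E) -> T(F); injectivity on unions
   of two rows forces it to send rows to rows, which lets E be rebuilt as
   (EQ) F Z, i.e. e and f are J-equivalent.  Thus |T| strictly drops along a
   strict J-chain of idempotent tuples, and adding 1 on top and 0 at the bottom
   the chain has at most C(|N|+1, 2) + 3 elements. *)

Section BoolMatrix.
Variable N : finType.
Implicit Types (A B E F : bmat N) (u v : {set N}).

Definition bmat1 : bmat N := [ffun ij : N * N => ij.1 == ij.2].

Lemma bmat_mul1l A : bmat_mul bmat1 A = A.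
Proof.
apply/ffunP=> [[i j]]; rewrite !ffunE /=.
apply/existsP/idP => [[k]|Aij]; first by rewrite ffunE /= => /andP[/eqP->].
by exists i; rewrite ffunE /= eqxx.
Qed.

Lemma bmat_mul1r A : bmat_mul A bmat1 = A.
Proof.
apply/ffunP=> [[i j]]; rewrite !ffunE /=.
apply/existsP/idP => [[k]|Aij]; first by rewrite ffunE /= => /andP[? /eqP<-].
by exists j; rewrite ffunE /= eqxx andbT.
Qed.

Definition brow A i : {set N} := [set j | A (i, j)].

Definition bimg A v : {set N} := [set j | [exists k, (k \in v) && A (k, j)]].

Lemma brow_ext A B : (forall i, brow A i = brow B i) -> A = B.
Proof. by move=> eqAB; apply/ffunP=> [[i j]]; have /setP/(_ j) := eqAB i; rewrite !inE. Qed.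

Lemma brow_mul A B i : brow (bmat_mul A B) i = bimg B (brow A i).
Proof.
apply/setP=> j; rewrite !inE ffunE /=.
by apply/existsP/existsP=> -[k Hk]; exists k; rewrite ?inE in Hk *.
Qed.

Lemma bimg_mul A B v : bimg (bmat_mul A B) v = bimg B (bimg A v).
Proof.
apply/setP=> j; rewrite !inE; apply/existsP/existsP=> [[k /andP[kv]]|[l /andP[]]].
  rewrite ffunE => /existsP[l /andP[Akl Blj]].
  by exists l; rewrite Blj andbT inE; apply/existsP; exists k; rewrite kv.
rewrite inE => /existsP[k /andP[kv Akl]] Blj.
by exists k; rewrite kv ffunE; apply/existsP; exists l; rewrite Akl.
Qed.

Lemma bimgU A u v : bimg A (u :|: v) = bimg A u :|: bimg A v.
Proof.
apply/setP=> j; rewrite !inE; apply/existsP/orP=> [[k /andP[]]|[]].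
- by rewrite inE => /orP[] kuv Akj; [left|right]; apply/existsP; exists k; rewrite kuv.
- by move=> /existsP[k /andP[ku Akj]]; exists k; rewrite inE ku.
- by move=> /existsP[k /andP[kv Akj]]; exists k; rewrite inE kv orbT.
Qed.

Lemma bimgS A u v : u \subset v -> bimg A u \subset bimg A v.
Proof.
move=> /subsetP uv; apply/subsetP=> j; rewrite !inE => /existsP[k /andP[ku Akj]].
by apply/existsP; exists k; rewrite uv.
Qed.

Definition bidem E := bmat_mul E E = E.

Lemma bidem_trans E i k j : bidem E -> E (i, k) -> E (k, j) -> E (i, j).
Proof. by move=> idE Eik Ekj; rewrite -idE ffunE; apply/existsP; exists k; rewrite Eik. Qed.

Lemma bidem_split E i j : bidem E -> E (i, j) -> exists k, E (i, k) && E (k, j).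
Proof. by move=> idE; rewrite -{1}idE ffunE => /existsP. Qed.

End BoolMatrix.

Lemma trans_refl_witness (T : finType) (r : rel T) (W : {set T}) :
  transitive r -> W != set0 -> (forall x, x \in W -> exists2 y, y \in W & r x y) ->
  exists2 x, x \in W & r x x.
Proof.
move=> trans_r /set0Pn[x0 Wx0] succW.
(* A point with fewest successors in W has the same successors as any of them. *)
pose after x := [set y in W | r x y].
case: (arg_minnP (fun x => #|after x|) Wx0) => x Wx minx.
have [y Wy rxy] := succW x Wx.
have after_y : after y \subset after x.
  by apply/subsetP=> z; rewrite !inE => /andP[-> /(trans_r _ _ _ rxy)].
have /eqP eq_after : after y == after x by rewrite eqEcard after_y minx.
have : y \in after y by rewrite eq_after inE Wy.
by rewrite inE => /andP[]; exists y.
Qed.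

Section IdempotentRows.
Variable N : finType.
Implicit Types (E F : bmat N) (w : {set N}).

Lemma bidem_diag_factor E i j :
  bidem E -> E (i, j) -> exists u, [&& E (u, u), E (i, u) & E (u, j)].
Proof.
move=> idE Eij; pose W := [set k | E (i, k) && E (k, j)].
have W0 : W != set0.
  by have [k Ek] := bidem_split idE Eij; apply/set0Pn; exists k; rewrite inE.
have succW x : x \in W -> exists2 y, y \in W & E (x, y).
  rewrite inE => /andP[Eix Exj]; have [y /andP[Exy Eyj]] := bidem_split idE Exj.
  by exists y; rewrite // inE Eyj (bidem_trans idE Eix Exy).
have trans_E : transitive (fun a b => E (a, b)) by move=> ? ? ?; apply: bidem_trans.
have [u] := trans_refl_witness trans_E W0 succW.
by rewrite inE => /andP[Eiu Euj] Euu; exists u; rewrite Euu Eiu.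
Qed.

Definition bdiag E : {set N} := [set s | E (s, s)].

Definition brows E : {set {set N}} := [set brow E s | s in bdiag E].

Definition brow_pairs E : {set {set N}} := [set a :|: b | a in brows E, b in brows E].

Lemma bdiag_brow E s : s \in bdiag E -> s \in brow E s.
Proof. by rewrite !inE. Qed.

Lemma brow_pairs_in E x y :
  x \in bdiag E -> y \in bdiag E -> brow E x :|: brow E y \in brow_pairs E.
Proof. by move=> Ex Ey; apply/imset2P; exists (brow E x) (brow E y); rewrite ?imset_f. Qed.

Lemma brow_closed E i k : bidem E -> k \in brow E i -> brow E k \subset brow E i.
Proof.
by move=> idE; rewrite inE => Eik; apply/subsetP=> j; rewrite !inE; apply: bidem_trans.
Qed.

Lemma bimg_closed F w k : bidem F -> k \in bimg F w -> brow F k \subset bimg F w.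
Proof.
move=> idF; rewrite inE => /existsP[l /andP[lw Flk]].
apply/subsetP=> j; rewrite !inE => Fkj; apply/existsP; exists l.
by rewrite lw (bidem_trans idF Flk Fkj).
Qed.

End IdempotentRows.

Section Transport.
Variables (N : finType) (E F P Q : bmat N).
Hypotheses (idE : bidem E) (idF : bidem F) (defF : F = bmat_mul P (bmat_mul E Q)).
Implicit Types (v w : {set N}).

Let alpha v := bimg F (bimg Q v).

Let alphaS v w : v \subset w -> alpha v \subset alpha w.
Proof. by move=> uv; apply/bimgS/bimgS. Qed.

Let alphaU v w : alpha (v :|: w) = alpha v :|: alpha w.
Proof. by rewrite /alpha !bimgU. Qed.

Let mem_alpha v t k s : t \in v -> Q (t, k) -> F (k, s) -> s \in alpha v.
Proof.
move=> vt Qtk Fks; rewrite inE; apply/existsP; exists k; rewrite Fks andbT inE.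
by apply/existsP; exists t; rewrite vt.
Qed.

Lemma brow_transport s :
  s \in bdiag F -> exists2 u, u \in bdiag E & brow F s = alpha (brow E u).
Proof.
move=> Fs; have rowFs : brow F s = alpha (bimg E (brow P s)).
  by rewrite -{1}idF brow_mul /alpha [in brow F s]defF brow_mul bimg_mul.
have := bdiag_brow Fs; rewrite [in X in X -> _]rowFs inE.
move=> /existsP[k /andP[]]; rewrite inE => /existsP[t /andP[]].
rewrite inE => /existsP[p /andP[Pp Ept]] Qtk Fks.
have [u /and3P[Euu Epu Eut]] := bidem_diag_factor idE Ept.
have s_alpha_u : s \in alpha (brow E u) by apply: mem_alpha Qtk Fks; rewrite inE.
exists u; first by rewrite inE.
apply/eqP; rewrite eqEsubset bimg_closed //= rowFs alphaS //.
apply/subsetP=> x; rewrite !inE => Eux; apply/existsP; exists p.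
by rewrite Pp (bidem_trans idE Epu Eux).
Qed.

Lemma brow_pairs_transport : brow_pairs F \subset alpha @: brow_pairs E.
Proof.
apply/subsetP=> z /imset2P[_ _ /imsetP[s1 Fs1 ->] /imsetP[s2 Fs2 ->] ->].
have [x Ex ->] := brow_transport Fs1; have [y Ey ->] := brow_transport Fs2.
by rewrite -alphaU imset_f // brow_pairs_in.
Qed.

Lemma card_brow_pairs_factor : #|brow_pairs F| <= #|brow_pairs E|.
Proof. exact: leq_trans (subset_leq_card brow_pairs_transport) (leq_imset_card _ _). Qed.

Hypothesis card_pairs_ge : #|brow_pairs E| <= #|brow_pairs F|.

Let alpha_inj : {in brow_pairs E &, injective alpha}.
Proof.
apply/imset_injP; rewrite eqn_leq leq_imset_card.
exact: leq_trans card_pairs_ge (subset_leq_card brow_pairs_transport).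
Qed.

Let alpha_onto : alpha @: brow_pairs E = brow_pairs F.
Proof.
apply/eqP; rewrite eq_sym eqEcard brow_pairs_transport.
exact: leq_trans (leq_imset_card _ _) card_pairs_ge.
Qed.

(* The image of [brow E t] is a union of two rows of [F], each the image of a
   row of [E]; injectivity splits [brow E t] accordingly, and since [t] lies in
   one part, [brow E t] equals it. *)
Lemma alpha_brow t :
  t \in bdiag E -> exists2 s, s \in bdiag F & alpha (brow E t) = brow F s.
Proof.
move=> Et; have : alpha (brow E t) \in brow_pairs F.
  by rewrite -alpha_onto imset_f // -[brow E t]setUid brow_pairs_in.
case/imset2P=> _ _ /imsetP[s1 Fs1 ->] /imsetP[s2 Fs2 ->] eq_img.
have [x Ex def1] := brow_transport Fs1; have [y Ey def2] := brow_transport Fs2.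
have eq_t : brow E t = brow E x :|: brow E y.
  apply: alpha_inj; rewrite ?brow_pairs_in // ?alphaU -?def1 -?def2 //.
  by rewrite -[brow E t]setUid brow_pairs_in.
move: (bdiag_brow Et); rewrite {1}eq_t in_setU => /orP[tx | ty].
- exists s1; rewrite // def1; congr alpha.
  by apply/eqP; rewrite eqEsubset brow_closed //= eq_t subsetUl.
- exists s2; rewrite // def2; congr alpha.
  by apply/eqP; rewrite eqEsubset brow_closed //= eq_t subsetUr.
Qed.

Let alpha_brow_subset u t : u \in bdiag E -> t \in bdiag E ->
  alpha (brow E u) \subset alpha (brow E t) -> brow E u \subset brow E t.
Proof.
move=> Eu Et /setUidPr sub_img.
have : brow E u :|: brow E t = brow E t :|: brow E t.
  by apply: alpha_inj; rewrite ?brow_pairs_in // !alphaU setUid.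
by rewrite setUid => /setUidPr.
Qed.

Lemma bidem_factor_back : exists P' Q', E = bmat_mul P' (bmat_mul F Q').
Proof.
pose Z : bmat N := [ffun ij => [exists u, [&& E (u, u), E (u, ij.2) &
                                           alpha (brow E u) \subset brow F ij.1]]].
exists (bmat_mul E Q), Z; apply: brow_ext => i.
rewrite brow_mul bimg_mul brow_mul -/(alpha _); apply/setP=> j; rewrite [RHS]inE.
apply/idP/existsP => [|[s /andP[s_img]]].
  rewrite inE => /(bidem_diag_factor idE)[u /and3P[Euu Eiu Euj]].
  have Eu : u \in bdiag E by rewrite inE.
  have [s Fs eq_s] := alpha_brow Eu.
  exists s; rewrite ffunE; apply/andP; split.
    have : s \in alpha (brow E u) by rewrite eq_s bdiag_brow.
    by apply/subsetP/alphaS/brow_closed; rewrite ?inE.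
  by apply/existsP; exists u; rewrite Euu Euj eq_s subxx.
rewrite ffunE => /existsP[u /and3P[Euu Euj sub_u]].
move: (s_img); rewrite inE => /existsP[k /andP[]]; rewrite inE => /existsP[t /andP[]].
rewrite inE => /(bidem_diag_factor idE)[u' /and3P[Eu'u' Eiu' Eu't]] Qtk Fks.
have s_img' : s \in alpha (brow E u') by apply: mem_alpha Qtk Fks; rewrite inE.
have /subsetP/(_ j) : brow E u \subset brow E u'.
  apply: alpha_brow_subset; rewrite ?inE //.
  exact: subset_trans sub_u (bimg_closed idF s_img').
by rewrite !inE => /(_ Euj); apply: bidem_trans idE Eiu'.
Qed.

End Transport.

Lemma card_setU_pairs (T : finType) (A : {set {set T}}) :
  #|[set a :|: b | a in A, b in A]| <= 'C(#|A|.+1, 2).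
Proof.
move: {2}#|A| (erefl #|A|) => n; elim: n A => [|n IHn] A cardA.
  move/eqP: cardA; rewrite cards_eq0 => /eqP->.
  rewrite cards0 bin_small // leqn0 cards_eq0.
  by apply/eqP/setP=> z; rewrite inE; apply/imset2P=> -[a b]; rewrite inE.
have [x Ax] : exists x, x \in A by apply/set0Pn; rewrite -card_gt0 cardA.
have cardAx : #|A :\ x| = n by move: cardA; rewrite (cardsD1 x) Ax add1n => -[].
have sub_pairs : [set a :|: b | a in A, b in A] \subset
    [set a :|: b | a in A :\ x, b in A :\ x] :|: [set x :|: b | b in A].
  apply/subsetP=> _ /imset2P[a b Aa Ab ->]; rewrite inE.
  have [-> | ax] := eqVneq a x; first by rewrite imset_f ?orbT.
  have [-> | bx] := eqVneq b x; first by rewrite setUC imset_f ?orbT.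
  by rewrite imset2_f // !inE ?ax ?bx.
rewrite cardA binS bin1; apply: leq_trans (subset_leq_card sub_pairs) _.
apply: leq_trans (leq_card_setU _ _) _.
apply: leq_add; first by rewrite -cardAx IHn.
by rewrite -cardA leq_imset_card.
Qed.

Lemma card_brow_pairs (N : finType) (E : bmat N) : #|brow_pairs E| <= 'C(#|N|.+1, 2).
Proof.
apply: leq_trans (card_setU_pairs _) (leq_bin2l _ _); rewrite ltnS.
exact: leq_trans (leq_imset_card _ _) (max_card _).
Qed.

Lemma double_bin2S n : 2 * 'C(n.+1, 2) = n.+1 * n.
Proof. by elim: n => // n IHn; rewrite binS bin1 mulnDr IHn; lia. Qed.

Section StackMonoid.
Variables (N : finType) (R : {set N} -> rel N).
Implicit Types (x y : smon N).

Definition smat x : bmat N := if x is SElt _ _ M _ _ then M else bmat1 N.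

Lemma smul_smat x y B Y M A X :
  smul R x y = SElt B Y M A X -> M = bmat_mul (smat y) (smat x).
Proof.
case: x => [|| B2 Y2 M2 A2 X2]; case: y => [|| B1 Y1 M1 A1 X1] //=.
- by case=> _ _ ->; rewrite bmat_mul1r.
- by case=> _ _ ->; rewrite bmat_mul1l.
- by case: ifP => // _ [].
Qed.

Lemma leJ_smat_factor Bf Yf Mf Af Xf Be Ye Me Ae Xe :
  leJ R (SElt Bf Yf Mf Af Xf) (SElt Be Ye Me Ae Xe) ->
  exists P Q, Mf = bmat_mul P (bmat_mul Me Q).
Proof.
move=> [a [b def_f]]; have := smul_smat (esym def_f).
move: def_f; case def_ae: (smul R a _) => [||B Y M A X].
- by move: def_ae; case: a => [|| ? ? ? ? ?] //=; case: ifP.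
- by case: b.
- by move=> _ ->; exists (smat b), (smat a); rewrite (smul_smat def_ae).
Qed.

Lemma leJ_refl x : leJ R x x.
Proof. by exists SOne, SOne; case: x. Qed.

Lemma leJ_zero y : leJ R y SZero -> y = SZero.
Proof. by move=> [a [b ->]]; case: a => [|| ? ? ? ? ?]; case: b => [|| ? ? ? ? ?]. Qed.

Lemma leJ_one x : leJ R SOne x -> x = SOne.
Proof.
move=> [a [b]]; case: x => [|| ? ? ? ? ?] //; case: a => [|| ? ? ? ? ?];
  case: b => [|| ? ? ? ? ?] //=; repeat case: ifP => //=.
Qed.

Lemma idempotent_sE B Y M A X :
  idempotent_s R (SElt B Y M A X) -> [/\ X = Y, R X B A & bidem M].
Proof. by rewrite /idempotent_s /=; case: ifP => // /andP[/eqP] ? ? [?]. Qed.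

Definition jheight x : nat :=
  match x with
  | SOne => 'C(#|N|.+1, 2) + 2
  | SZero => 0
  | SElt _ _ M _ _ => #|brow_pairs M| + 1
  end.

Lemma jheight_max x : jheight x <= 'C(#|N|.+1, 2) + 2.
Proof. by case: x => //= *; rewrite leq_add ?card_brow_pairs. Qed.

Lemma jheight_ltJ x y :
  idempotent_s R x -> idempotent_s R y -> ltJ R y x -> jheight y < jheight x.
Proof.
move=> idx idy [yx Nxy].
case: x idx yx Nxy => [|| Be Ye Me Ae Xe] idx yx Nxy.
- case: y idy yx Nxy => [|| B Y M A X] //= _ _ _; first by rewrite addn2.
  by rewrite addn1 addn2 !ltnS card_brow_pairs.
- by case: Nxy; rewrite (leJ_zero yx); apply: leJ_refl.
case: y idy yx Nxy => [|| Bf Yf Mf Af Xf] //= idy yx Nxy.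
- by have := leJ_one yx.
- by rewrite addn1.
have [P [Q defMf]] := leJ_smat_factor yx.
have [eXe Re idMe] := idempotent_sE idx.
have [eXf Rf idMf] := idempotent_sE idy.
rewrite ltn_add2r ltn_neqAle (card_brow_pairs_factor idMe idMf defMf) andbT.
apply: contra_notN Nxy => /eqP eq_card.
have [P' [Q' defMe]] := bidem_factor_back idMe idMf defMf (eq_leq (esym eq_card)).
exists (SElt Be Ye Q' Af Xf), (SElt Bf Xf P' Ae Xe); subst Ye Yf => /=.
by rewrite eqxx Rf /= eqxx Rf -defMe.
Qed.

End StackMonoid.

Theorem mainTheorem15 (N : finType) (R : {set N} -> rel N)
  (k : nat) (e : nat -> smon N) :
  regJchain R k e -> 2 * k <= #|N| ^ 2 + #|N| + 2 + 4.
Proof.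
case: k => [//|k] [ide lte].
have descent i : i <= k -> jheight (e i) + i <= jheight (e 0).
  elim: i => [|i IHi] lt_ik; first by rewrite addn0.
  have := jheight_ltJ (ide i (ltnW lt_ik)) (ide i.+1 lt_ik) (lte i lt_ik).
  have := IHi (ltnW lt_ik); lia.
have := descent k (leqnn k); have := jheight_max (e 0); have := double_bin2S #|N|.
lia.
Qed.
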